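(* Every term $P$ over $\Sigma_m$ is provably equal, from $\mathrm{Md}$ in equational logic, to a Standard Meadow Form whose variables are among the variables of $P$.
   Context: The signature of meadows is $\Sigma_m=(0,1,+,\cdot,-,{}^{-1})$. $\mathrm{Md}$ is the set of equations: $(x+y)+z=x+(y+z)$, $x+y=y+x$, $x+0=x$, $x+(-x)=0$, $(x\cdot y)\cdot z=x\cdot(y\cdot z)$, $x\cdot y=y\cdot x$, $1\cdot x=x$, $x\cdot(y+z)=x\cdot y+x\cdot z$, $(x^{-1})^{-1}=x$, $x\cdot(x\cdot x^{-1})=x$. Notation: $t/u$ abbreviates $t\cdot u^{-1}$; $1_t$ abbreviates $t\cdot t^{-1}$ and $0_t$ abbreviates $1-1_t$. A polynomial is a $\Sigma_m$-term not containing ${}^{-1}$. SMFs of level $n$: an SMF of level $0$ is any term $s/t$ with $s,t$ polynomials; an SMF of level $n+1$ is any term $0_t\cdot P+1_t\cdot Q$ with $t$ a polynomial and $P,Q$ SMFs of level $n$. A Standard Meadow Form (SMF) is an SMF of some level. *)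

From Stdlib Require Import List.
Import ListNotations.

Inductive term : Type :=
| Var  : nat -> term
| Zero : term
| One  : term
| Add  : term -> term -> term
| Mul  : term -> term -> term
| Neg  : term -> term
| Inv  : term -> term.

Fixpoint vars (t : term) : list nat :=
  match t with
  | Var n => [n]
  | Zero | One => []
  | Add a b | Mul a b => vars a ++ vars b
  | Neg a | Inv a => vars a
  end.

Fixpoint subst (s : nat -> term) (t : term) : term :=
  match t with
  | Var n => s n
  | Zero => Zero
  | One => One
  | Add a b => Add (subst s a) (subst s b)
  | Mul a b => Mul (subst s a) (subst s b)
  | Neg a => Neg (subst s a)
  | Inv a => Inv (subst s a)
  end.

Definition vx := Var 0.
Definition vy := Var 1.
Definition vz := Var 2.

Inductive Md : term -> term -> Prop :=
| Md_addA : Md (Add (Add vx vy) vz) (Add vx (Add vy vz))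
| Md_addC : Md (Add vx vy) (Add vy vx)
| Md_add0 : Md (Add vx Zero) vx
| Md_addN : Md (Add vx (Neg vx)) Zero
| Md_mulA : Md (Mul (Mul vx vy) vz) (Mul vx (Mul vy vz))
| Md_mulC : Md (Mul vx vy) (Mul vy vx)
| Md_mul1 : Md (Mul One vx) vx
| Md_mulD : Md (Mul vx (Add vy vz)) (Add (Mul vx vy) (Mul vx vz))
| Md_invK : Md (Inv (Inv vx)) vx
| Md_rinv : Md (Mul vx (Mul vx (Inv vx))) vx.

Inductive Md_proves : term -> term -> Prop :=
| pr_ax    : forall t u, Md t u -> Md_proves t u
| pr_refl  : forall t, Md_proves t t
| pr_sym   : forall t u, Md_proves t u -> Md_proves u t
| pr_trans : forall t u v, Md_proves t u -> Md_proves u v -> Md_proves t v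
| pr_subst : forall (s : nat -> term) t u, Md_proves t u -> Md_proves (subst s t) (subst s u)
| pr_add   : forall t t' u u', Md_proves t t' -> Md_proves u u' -> Md_proves (Add t u) (Add t' u')
| pr_mul   : forall t t' u u', Md_proves t t' -> Md_proves u u' -> Md_proves (Mul t u) (Mul t' u')
| pr_neg   : forall t t', Md_proves t t' -> Md_proves (Neg t) (Neg t')
| pr_inv   : forall t t', Md_proves t t' -> Md_proves (Inv t) (Inv t').

Fixpoint polynomial (t : term) : Prop :=
  match t with
  | Var _ | Zero | One => True
  | Add a b | Mul a b => polynomial a /\ polynomial b
  | Neg a => polynomial a
  | Inv _ => False
  end.

Definition tdiv (t u : term) : term := Mul t (Inv u).
Definition one_ (t : term) : term := Mul t (Inv t).
Definition zero_ (t : term) : term := Add One (Neg (one_ t)).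

Inductive SMF_level : nat -> term -> Prop :=
| SMF0 : forall s t, polynomial s -> polynomial t -> SMF_level 0 (tdiv s t)
| SMFS : forall n t P Q, polynomial t -> SMF_level n P -> SMF_level n Q ->
         SMF_level (S n) (Add (Mul (zero_ t) P) (Mul (one_ t) Q)).

Definition SMF (t : term) : Prop := exists n, SMF_level n t.

From Pilot Require Import Defs.
From Stdlib Require Import List.
From Stdlib Require Import Setoid Morphisms Ring Ring_theory Arith.
Import Pilot.Defs.

(* Provable equality from Md is a congruence, and Md contains the axioms of a
   commutative ring, so it is registered as a setoid ring and [ring] decides all
   ring identities.  From the meadow axioms for ^-1 we derive uniqueness of the
   pseudo-inverse and hence (xy)^-1 = x^-1 y^-1 and 1^-1 = 1.
   An SMF of level n+1 is the "branch" (1 - f) P + f Q with f = 1_t; since f is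
   idempotent, sums, products, negations and inverses distribute over branches.
   On leaves s/t the operations are computed explicitly (the sum needs a case
   split on 1_t and 1_v).  SMFs of different levels are brought to a common level
   by padding with trivial branches on 1_1.  Writing [has_nf T] for "T is
   provably equal to an SMF whose variables are among those of T", we show that
   [has_nf] holds for constants and variables and is closed under the four
   operations; the theorem then follows by induction on the term. *)

Notation "t ≡ u" := (Md_proves t u) (at level 70, no associativity).

(** * Md as a commutative ring *)

Definition sub3 (a b c : term) : nat -> term :=
  fun n => match n with 0 => a | 1 => b | _ => c end.

Lemma add_assoc a b c : Add (Add a b) c ≡ Add a (Add b c).
Proof. exact (pr_subst (sub3 a b c) _ _ (pr_ax _ _ Md_addA)). Qed.
Lemma add_comm a b : Add a b ≡ Add b a.
Proof. exact (pr_subst (sub3 a b a) _ _ (pr_ax _ _ Md_addC)). Qed.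
Lemma add_zero a : Add a Zero ≡ a.
Proof. exact (pr_subst (sub3 a a a) _ _ (pr_ax _ _ Md_add0)). Qed.
Lemma add_neg a : Add a (Neg a) ≡ Zero.
Proof. exact (pr_subst (sub3 a a a) _ _ (pr_ax _ _ Md_addN)). Qed.
Lemma mul_assoc a b c : Mul (Mul a b) c ≡ Mul a (Mul b c).
Proof. exact (pr_subst (sub3 a b c) _ _ (pr_ax _ _ Md_mulA)). Qed.
Lemma mul_comm a b : Mul a b ≡ Mul b a.
Proof. exact (pr_subst (sub3 a b a) _ _ (pr_ax _ _ Md_mulC)). Qed.
Lemma one_mul a : Mul One a ≡ a.
Proof. exact (pr_subst (sub3 a a a) _ _ (pr_ax _ _ Md_mul1)). Qed.
Lemma mul_add_distr a b c : Mul a (Add b c) ≡ Add (Mul a b) (Mul a c).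
Proof. exact (pr_subst (sub3 a b c) _ _ (pr_ax _ _ Md_mulD)). Qed.
Lemma inv_inv a : Inv (Inv a) ≡ a.
Proof. exact (pr_subst (sub3 a a a) _ _ (pr_ax _ _ Md_invK)). Qed.
Lemma mul_mul_inv a : Mul a (Mul a (Inv a)) ≡ a.
Proof. exact (pr_subst (sub3 a a a) _ _ (pr_ax _ _ Md_rinv)). Qed.

#[global] Instance Md_proves_equiv : Equivalence Md_proves.
Proof. split; [exact pr_refl | exact pr_sym | exact pr_trans]. Qed.
#[global] Instance Add_proper : Proper (Md_proves ==> Md_proves ==> Md_proves) Add.
Proof. intros ? ? ? ? ? ?; apply pr_add; assumption. Qed.
#[global] Instance Mul_proper : Proper (Md_proves ==> Md_proves ==> Md_proves) Mul.
Proof. intros ? ? ? ? ? ?; apply pr_mul; assumption. Qed.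
#[global] Instance Neg_proper : Proper (Md_proves ==> Md_proves) Neg.
Proof. intros ? ? ?; apply pr_neg; assumption. Qed.
#[global] Instance Inv_proper : Proper (Md_proves ==> Md_proves) Inv.
Proof. intros ? ? ?; apply pr_inv; assumption. Qed.

Lemma meadow_ring : ring_theory Zero One Add Mul (fun x y => Add x (Neg y)) Neg Md_proves.
Proof.
  constructor; intros.
  - rewrite add_comm; apply add_zero.
  - apply add_comm.
  - symmetry; apply add_assoc.
  - apply one_mul.
  - apply mul_comm.
  - symmetry; apply mul_assoc.
  - rewrite mul_comm, mul_add_distr, (mul_comm z x), (mul_comm z y); reflexivity.
  - reflexivity.
  - apply add_neg.
Qed.

Lemma meadow_ring_ext : ring_eq_ext Add Mul Neg Md_proves.
Proof. constructor; typeclasses eauto. Qed.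

Add Ring meadow : meadow_ring (setoid Md_proves_equiv meadow_ring_ext).

(** * The pseudo-inverse *)

(* The axiom x (x x^-1) = x, applied to x^-1 and using x^-1^-1 = x. *)
Lemma inv_mul_mul a : Mul (Inv a) (Mul (Inv a) a) ≡ Inv a.
Proof. rewrite <- (inv_inv a) at 3. apply mul_mul_inv. Qed.

Lemma inv_unique x y :
  Mul x (Mul x y) ≡ x -> Mul y (Mul y x) ≡ y -> y ≡ Inv x.
Proof.
  intros Hx Hy.
  assert (Hidem : Mul x y ≡ Mul x (Inv x)).
  { transitivity (Mul (Mul x y) (Mul x (Inv x))).
    - rewrite <- (mul_mul_inv x) at 1; ring.
    - transitivity (Mul (Mul x (Mul x y)) (Inv x)); [ring | rewrite Hx; reflexivity]. }
  rewrite <- Hy.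
  transitivity (Mul (Mul x y) y); [ring|].
  rewrite Hidem.
  transitivity (Mul (Mul x y) (Inv x)); [ring|].
  rewrite Hidem.
  transitivity (Mul (Inv x) (Mul (Inv x) x)); [ring | apply inv_mul_mul].
Qed.

Lemma inv_mul x y : Inv (Mul x y) ≡ Mul (Inv x) (Inv y).
Proof.
  symmetry; apply inv_unique.
  - transitivity (Mul (Mul x (Mul x (Inv x))) (Mul y (Mul y (Inv y)))); [ring|].
    rewrite !mul_mul_inv; reflexivity.
  - transitivity (Mul (Mul (Inv x) (Mul (Inv x) x)) (Mul (Inv y) (Mul (Inv y) y))); [ring|].
    rewrite !inv_mul_mul; reflexivity.
Qed.

Lemma inv_one : Inv One ≡ One.
Proof. symmetry; apply inv_unique; ring. Qed.

(* 1_t is idempotent; this is what makes the branching construction work. *)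
Lemma one_idem t : Mul (one_ t) (one_ t) ≡ one_ t.
Proof.
  unfold one_. transitivity (Mul (Mul t (Mul t (Inv t))) (Inv t)); [ring|].
  rewrite mul_mul_inv; reflexivity.
Qed.

Lemma inv_sq_cancel t : Add (Mul t (Mul (Inv t) (Inv t))) (Neg (Inv t)) ≡ Zero.
Proof.
  transitivity (Add (Mul (Inv t) (Mul (Inv t) t)) (Neg (Inv t))); [ring|].
  rewrite inv_mul_mul; ring.
Qed.

(** * Branches *)

(* (1 - f) A + f B; [branch (one_ t) P Q] is literally the SMF of level n+1
   built from t, P and Q. *)
Definition branch (f A B : term) : term := Add (Mul (Add One (Neg f)) A) (Mul f B).

#[global] Instance branch_proper :
  Proper (Md_proves ==> Md_proves ==> Md_proves ==> Md_proves) branch.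
Proof. intros ? ? H1 ? ? H2 ? ? H3; unfold branch; rewrite H1, H2, H3; reflexivity. Qed.

Lemma branch_mul f A B C D : Mul f f ≡ f ->
  Mul (branch f A B) (branch f C D) ≡ branch f (Mul A C) (Mul B D).
Proof.
  intros Hf; unfold branch.
  transitivity (Add (Add (Mul (Add One (Neg f)) (Mul A C)) (Mul f (Mul B D)))
     (Mul (Add (Mul f f) (Neg f))
          (Add (Add (Mul A C) (Neg (Mul A D))) (Add (Neg (Mul B C)) (Mul B D))))).
  - ring.
  - rewrite Hf; ring.
Qed.

Lemma branch_inv f A B : Mul f f ≡ f ->
  Inv (branch f A B) ≡ branch f (Inv A) (Inv B).
Proof.
  intros Hf; symmetry; apply inv_unique; rewrite !branch_mul by exact Hf.
  - rewrite !mul_mul_inv; reflexivity.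
  - rewrite !inv_mul_mul; reflexivity.
Qed.

Lemma leaf_mul s t u v : Mul (tdiv s t) (tdiv u v) ≡ tdiv (Mul s u) (Mul t v).
Proof. unfold tdiv; rewrite inv_mul; ring. Qed.

Lemma leaf_inv s t : Inv (tdiv s t) ≡ tdiv t s.
Proof. unfold tdiv; rewrite inv_mul, inv_inv; ring. Qed.

Lemma leaf_neg s t : Neg (tdiv s t) ≡ tdiv (Neg s) t.
Proof. unfold tdiv; ring. Qed.

(* s/t + u/v by cases: if 1_t = 0 it is u/v, if 1_v = 0 it is s/t, and
   otherwise it is (sv + ut)/(tv). *)
Lemma leaf_add s t u v :
  Add (tdiv s t) (tdiv u v)
  ≡ branch (one_ t) (branch (one_ v) (tdiv u v) (tdiv u v))
                    (branch (one_ v) (tdiv s t) (tdiv (Add (Mul s v) (Mul u t)) (Mul t v))).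
Proof.
  unfold branch, one_, tdiv. rewrite inv_mul.
  set (a := Inv t). set (b := Inv v).
  set (p := Add (Mul t (Mul a a)) (Neg a)).
  set (q := Add (Mul v (Mul b b)) (Neg b)).
  assert (Hp : p ≡ Zero) by apply inv_sq_cancel.
  assert (Hq : q ≡ Zero) by apply inv_sq_cancel.
  symmetry.
  transitivity (Add (Add (Mul u b) (Mul s a))
     (Add (Mul s p) (Add (Mul (Mul t (Mul a a)) (Mul v (Mul s q)))
        (Mul (Mul t u) (Add (Mul q (Mul t (Mul a a))) (Mul p b)))))).
  - unfold p, q; ring.
  - rewrite Hp, Hq; ring.
Qed.

(** * Normal forms *)

Definition has_nf (T : term) : Prop :=
  exists R, SMF R /\ T ≡ R /\ incl (vars R) (vars T).

Ltac vars_incl := unfold incl, branch, one_, zero_, tdiv in *; simpl in *;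
  let v := fresh "v" in let Hv := fresh "Hv" in intros v Hv;
  repeat match goal with H : forall _, In _ _ -> In _ _ |- _ =>
    pose proof (H v); clear H end;
  repeat rewrite in_app_iff in *; simpl in *; tauto.

Lemma nf_transfer T T' : T ≡ T' -> incl (vars T') (vars T) -> has_nf T' -> has_nf T.
Proof.
  intros E I [R [SR [ER IR]]].
  exists R; split; [exact SR | split; [rewrite E; exact ER | vars_incl]].
Qed.

Lemma nf_leaf s t : polynomial s -> polynomial t -> has_nf (tdiv s t).
Proof.
  intros Hs Ht; exists (tdiv s t).
  split; [exists 0; constructor; assumption | split; [reflexivity | vars_incl]].
Qed.

(* Padding with trivial branches on 1_1 raises the level of an SMF. *)
Lemma smf_raise k n P : SMF_level n P ->
  exists P', SMF_level (k + n) P' /\ P ≡ P' /\ incl (vars P') (vars P).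
Proof.
  intros HP; induction k as [|k IH].
  - exists P; split; [exact HP | split; [reflexivity | vars_incl]].
  - destruct IH as [P' [HP' [E I]]].
    exists (branch (one_ One) P' P'); split; [apply SMFS; simpl; auto | split].
    + rewrite E; unfold branch; ring.
    + vars_incl.
Qed.

Lemma nf_branch t R1 R2 : polynomial t -> SMF R1 -> SMF R2 -> has_nf (branch (one_ t) R1 R2).
Proof.
  intros Ht [n1 H1] [n2 H2].
  destruct (smf_raise n2 n1 R1 H1) as [R1' [A1 [E1 I1]]].
  destruct (smf_raise n1 n2 R2 H2) as [R2' [A2 [E2 I2]]].
  rewrite Nat.add_comm in A2.
  exists (branch (one_ t) R1' R2'); split; [exists (S (n2 + n1)); apply SMFS; auto | split].
  - rewrite E1, E2; reflexivity.
  - vars_incl.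
Qed.

Lemma nf_binop (op : term -> term -> term)
  (Hproper : Proper (Md_proves ==> Md_proves ==> Md_proves) op)
  (Hvars : forall A B, vars (op A B) = vars A ++ vars B)
  (Hl : forall t A B C, op (branch (one_ t) A B) C ≡ branch (one_ t) (op A C) (op B C))
  (Hr : forall t A B C, op C (branch (one_ t) A B) ≡ branch (one_ t) (op C A) (op C B))
  (Hleaf : forall s t u v, polynomial s -> polynomial t -> polynomial u -> polynomial v ->
     has_nf (op (tdiv s t) (tdiv u v))) :
  forall a b, has_nf a -> has_nf b -> has_nf (op a b).
Proof.
  assert (Hsmf : forall n P, SMF_level n P -> forall m Q, SMF_level m Q -> has_nf (op P Q)).
  { induction 1 as [s t Hs Ht | n t P1 P2 Ht _ IH1 _ IH2].
    - induction 1 as [u v Hu Hv | m g Q1 Q2 Hg _ IH1 _ IH2]; [apply Hleaf; assumption|].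
      destruct IH1 as [R1 [S1 [E1 I1]]], IH2 as [R2 [S2 [E2 I2]]].
      change (has_nf (op (tdiv s t) (branch (one_ g) Q1 Q2))).
      apply (nf_transfer _ (branch (one_ g) R1 R2)); [| rewrite Hvars in *; vars_incl |].
      + rewrite Hr, E1, E2; reflexivity.
      + apply nf_branch; assumption.
    - intros m Q HQ.
      destruct (IH1 m Q HQ) as [R1 [S1 [E1 I1]]], (IH2 m Q HQ) as [R2 [S2 [E2 I2]]].
      change (has_nf (op (branch (one_ t) P1 P2) Q)).
      apply (nf_transfer _ (branch (one_ t) R1 R2)); [| rewrite Hvars in *; vars_incl |].
      + rewrite Hl, E1, E2; reflexivity.
      + apply nf_branch; assumption. }
  intros a b [Qa [[na Ha] [Ea Ia]]] [Qb [[nb Hb] [Eb Ib]]].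
  apply (nf_transfer _ (op Qa Qb)); [rewrite Ea, Eb; reflexivity | rewrite !Hvars; vars_incl |].
  exact (Hsmf _ _ Ha _ _ Hb).
Qed.

Lemma nf_unop (op : term -> term)
  (Hproper : Proper (Md_proves ==> Md_proves) op)
  (Hvars : forall A, vars (op A) = vars A)
  (Hbranch : forall t A B, op (branch (one_ t) A B) ≡ branch (one_ t) (op A) (op B))
  (Hleaf : forall s t, polynomial s -> polynomial t -> has_nf (op (tdiv s t))) :
  forall a, has_nf a -> has_nf (op a).
Proof.
  assert (Hsmf : forall n P, SMF_level n P -> has_nf (op P)).
  { induction 1 as [s t Hs Ht | n t P1 P2 Ht _ IH1 _ IH2]; [apply Hleaf; assumption|].
    destruct IH1 as [R1 [S1 [E1 I1]]], IH2 as [R2 [S2 [E2 I2]]].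
    change (has_nf (op (branch (one_ t) P1 P2))).
    apply (nf_transfer _ (branch (one_ t) R1 R2)); [| rewrite Hvars in *; vars_incl |].
    - rewrite Hbranch, E1, E2; reflexivity.
    - apply nf_branch; assumption. }
  intros a [Qa [[na Ha] [Ea Ia]]].
  apply (nf_transfer _ (op Qa)); [rewrite Ea; reflexivity | rewrite !Hvars; vars_incl |].
  exact (Hsmf _ _ Ha).
Qed.

Lemma nf_polynomial c : polynomial c -> has_nf c.
Proof.
  intros Hc; apply (nf_transfer _ (tdiv c One)).
  - unfold tdiv; rewrite inv_one; ring.
  - vars_incl.
  - apply nf_leaf; simpl; auto.
Qed.

Lemma nf_add a b : has_nf a -> has_nf b -> has_nf (Add a b).
Proof.
  apply nf_binop; [typeclasses eauto | reflexivity | intros; unfold branch; ring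
                  | intros; unfold branch; ring |].
  intros s t u v Hs Ht Hu Hv.
  apply (nf_transfer _ _ (leaf_add s t u v)); [vars_incl|].
  apply nf_branch; [assumption | exists 1 | exists 1];
    apply SMFS; simpl; auto; constructor; simpl; auto.
Qed.

Lemma nf_mul a b : has_nf a -> has_nf b -> has_nf (Mul a b).
Proof.
  apply nf_binop; [typeclasses eauto | reflexivity | intros; unfold branch; ring
                  | intros; unfold branch; ring |].
  intros s t u v Hs Ht Hu Hv.
  apply (nf_transfer _ _ (leaf_mul s t u v)); [vars_incl | apply nf_leaf; simpl; auto].
Qed.

Lemma nf_neg a : has_nf a -> has_nf (Neg a).
Proof.
  apply nf_unop; [typeclasses eauto | reflexivity | intros; unfold branch; ring |].
  intros s t Hs Ht.
  apply (nf_transfer _ _ (leaf_neg s t)); [vars_incl | apply nf_leaf; simpl; auto].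
Qed.

Lemma nf_inv a : has_nf a -> has_nf (Inv a).
Proof.
  apply nf_unop; [typeclasses eauto | reflexivity | intros; apply branch_inv, one_idem |].
  intros s t Hs Ht.
  apply (nf_transfer _ _ (leaf_inv s t)); [vars_incl | apply nf_leaf; assumption].
Qed.

Theorem theorem1 :
  forall P : term,
    exists Q : term,
      SMF Q /\ Md_proves P Q /\ (forall v : nat, In v (vars Q) -> In v (vars P)).
Proof.
  intros P; change (has_nf P).
  induction P.
  - apply nf_polynomial; exact I.
  - apply nf_polynomial; exact I.
  - apply nf_polynomial; exact I.
  - apply nf_add; assumption.
  - apply nf_mul; assumption.
  - apply nf_neg; assumption.
  - apply nf_inv; assumption.
Qed.
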